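(* Let $G$ be a bipartite graph with bipartition $\{X,Y\}$ such that $|V(G)|$ is divisible by $3$. Let $H$ be the graph with $V(H)=V(G)\cup\{x,y,x',y'\}$ (four new vertices) and $E(H)=E(G)\cup\{xv: v\in X\}\cup\{yv: v\in Y\}\cup\{xy,xx',x'y',yy'\}$, and let $k=|E(H)|-4|V(G)|/3-4$. If $H'$ is a cactus with $V(H')=V(H)$ obtained from $H$ by deleting at most $k$ edges, then the number of cycles of $H'$ equals $|V(G)|/3+1=(|V(H')|-1)/3$.
   Context: All graphs are finite, simple and undirected. A cactus is a connected graph in which every edge lies in at most one cycle. *)

(* Simple graphs on a finType V are given by their edge set
   E : {set {set V}}, each edge being a 2-element subset of V. *)
From mathcomp Require Import all_boot all_order all_algebra.
Set Implicit Arguments. Unset Strict Implicit. Unset Printing Implicit Defensive.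

Section Graphs.
Variable V : finType.

Definition simple_edges (E : {set {set V}}) : Prop :=
  forall e, e \in E -> #|e| = 2.

Definition adj (E : {set {set V}}) : rel V := fun u v => [set u; v] \in E.

Definition connected_graph (E : {set {set V}}) : Prop :=
  forall u v : V, connect (adj E) u v.

Definition cycle_edges (s : seq V) : {set {set V}} :=
  [set [set x; next s x] | x in s].

Definition is_cycle_of (E C : {set {set V}}) : Prop :=
  C \subset E /\
  exists s : seq V, [/\ 3 <= size s, uniq s & C = cycle_edges s].

Definition cactus (E : {set {set V}}) : Prop :=
  connected_graph E /\
  forall e, e \in E -> forall C1 C2, is_cycle_of E C1 -> is_cycle_of E C2 ->
    e \in C1 -> e \in C2 -> C1 = C2.

Definition num_cycles_eq (E : {set {set V}}) (m : nat) : Prop :=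
  exists S : {set {set {set V}}},
    (forall C, C \in S <-> is_cycle_of E C) /\ #|S| = m.

End Graphs.

Section Construction.
Variable T : finType.

(* vertices of H: V(G) (as inl) plus four new vertices x, y, x', y' *)
Definition HV : finType := (T + 'I_4)%type.
Definition vx  : HV := inr (@Ordinal 4 0 isT).
Definition vy  : HV := inr (@Ordinal 4 1 isT).
Definition vx' : HV := inr (@Ordinal 4 2 isT).
Definition vy' : HV := inr (@Ordinal 4 3 isT).

(* E(H) = E(G) u {xv : v in X} u {yv : v in Y} u {xy, xx', x'y', yy'},
   with Y = V(G) \ X *)
Definition H_edges (EG : {set {set T}}) (X : {set T}) : {set {set HV}} :=
  [set (@inl T 'I_4) @: (e : {set T}) | e : {set T} in EG]
  :|: [set [set vx; inl v] | v in X]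
  :|: [set [set vy; inl v] | v in ~: X]
  :|: [set [set vx; vy]; [set vx; vx']; [set vx'; vy']; [set vy; vy']].

End Construction.

From mathcomp Require Import all_boot all_order all_algebra zify.
From Stdlib Require Import ClassicalEpsilon.
Set Implicit Arguments. Unset Strict Implicit. Unset Printing Implicit Defensive.

(* Colouring [X] and the new vertices [y], [x'] black and everything else white
   makes H properly 2-coloured, so every cycle of the cactus H' has at least four
   edges; as the cycles of a cactus are edge-disjoint, 4c <= |E(H')| for c cycles.
   Deleting one edge from each cycle leaves a forest on n + 4 vertices (n = |V(G)|),
   so |E(H')| <= n + 3 + c. The deletion budget gives |E(H')| >= 4n/3 + 4, and the
   three inequalities force c = n/3 + 1. *)

Lemma next_next_neq (T : eqType) (s : seq T) x :
  uniq s -> 3 <= size s -> x \in s -> next s (next s x) != x.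
Proof.
move=> us s3 xs; case: (rot_to xs) => i s' def_s.
have us' : uniq (x :: s') by rewrite -def_s rot_uniq.
have s'2 : 2 <= size s'.
  by rewrite -ltnS -[(size s').+1]/(size (x :: s')) -def_s size_rot.
rewrite -!(next_rot i us) def_s {def_s}.
case: s' us' s'2 => [|a [|b t]] //= us' _.
move: us'; rewrite !inE !negb_or => /and3P[/and3P[xa xb _] /andP[ab _] _].
by rewrite /next /= eqxx [a == x]eq_sym (negbTE xa) eqxx eq_sym.
Qed.

Lemma path_alternating (T : Type) (r : rel T) (f : T -> bool) :
  (forall u v, r u v -> f u != f v) ->
  forall x p, path r x p -> f (last x p) = f x (+) odd (size p).
Proof.
move=> rf x p; elim: p x => [|y p IHp] x /=; first by rewrite addbF.
case/andP => /rf fxy /IHp ->; move: fxy.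
by case: (f x); case: (f y); case: (odd _).
Qed.

Lemma cycle_alternating_even (T : Type) (r : rel T) (f : T -> bool) s :
  (forall u v, r u v -> f u != f v) -> cycle r s -> ~~ odd (size s).
Proof.
move=> rf; case: s => [|x t] //= /(path_alternating rf).
by rewrite last_rcons size_rcons /=; case: (f x); case: (odd (size t)).
Qed.

Section Graphs.
Variable V : finType.
Implicit Types (E C : {set {set V}}) (s : seq V).

Lemma adjC E u v : adj E u v = adj E v u.
Proof. by rewrite /adj setUC. Qed.

Lemma simple_edge_other E e w :
  simple_edges E -> e \in E -> w \in e -> exists2 z, z != w & e = [set w; z].
Proof.
move=> sE eE we; have /cards2P[a [b [ab def_e]]] : #|e| == 2 by rewrite sE.
move: we; rewrite def_e !inE => /orP[] /eqP->; first by exists b; rewrite 1?eq_sym.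
by exists a; rewrite 1?setUC.
Qed.

Lemma card_cycle_edges s : uniq s -> 3 <= size s -> #|cycle_edges s| = size s.
Proof.
move=> us s3; rewrite card_in_imset ?(card_uniqP us) // => x y xs ys exy.
apply/eqP; apply: contraT => xy.
have: x \in [set y; next s y] by rewrite -exy !inE eqxx.
have: y \in [set x; next s x] by rewrite exy !inE eqxx.
rewrite !inE eq_sym (negbTE xy) /= => /eqP y_nx /eqP x_ny.
by move: (next_next_neq us s3 ys); rewrite -x_ny -y_nx eqxx.
Qed.

Lemma cycle_edges_sub E s : cycle (adj E) s -> cycle_edges s \subset E.
Proof. by move=> cs; apply/subsetP => _ /imsetP[x xs ->]; exact: next_cycle cs xs. Qed.

Lemma cycle_in_edges E s : uniq s -> cycle_edges s \subset E -> cycle (adj E) s.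
Proof.
move=> us sE; apply: (cycle_from_next us) => x xs.
by apply: (subsetP sE); apply: imset_f.
Qed.

Lemma cycle_edges_neq0 s : 0 < size s -> cycle_edges s != set0.
Proof.
case: s => // x s _; apply/set0Pn; exists [set x; next (x :: s) x].
by apply: imset_f; rewrite mem_head.
Qed.

Definition properly_coloured (f : V -> bool) E :=
  forall e, e \in E -> exists a b, e = [set a; b] /\ f a != f b.

Lemma properly_coloured_sub (f : V -> bool) E E' :
  E' \subset E -> properly_coloured f E -> properly_coloured f E'.
Proof. by move=> sub colE e /(subsetP sub); exact: colE. Qed.

Lemma properly_coloured_simple (f : V -> bool) E :
  properly_coloured f E -> simple_edges E.
Proof.
move=> colE e /colE[a [b [-> fab]]]; rewrite cards2; suff -> : a != b by [].
by apply/eqP => ab; rewrite ab eqxx in fab.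
Qed.

Lemma properly_coloured_adj (f : V -> bool) E :
  properly_coloured f E -> forall u v, adj E u v -> f u != f v.
Proof.
move=> colE u v /colE[a [b [def_uv fab]]]; apply: contra fab => /eqP fuv.
have fw w : w \in [set u; v] -> f w = f u by rewrite !inE fuv => /orP[]/eqP->.
by rewrite (fw a) ?(fw b) // def_uv !inE eqxx ?orbT.
Qed.

Definition acyclic E := forall s, uniq s -> 3 <= size s -> ~~ cycle (adj E) s.

Lemma acyclic_sub E E' : E' \subset E -> acyclic E -> acyclic E'.
Proof.
move=> sub acE s us s3; apply: contra (acE s us s3); apply: sub_cycle => x y.
exact: (subsetP sub).
Qed.

Lemma acyclic_path_notin E w u t z :
  acyclic E -> uniq (w :: u :: t) -> path (adj E) w (u :: t) -> adj E z w ->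
  z \notin t.
Proof.
move=> acE ut pt zw; apply/negP => zt; move: ut pt; case/splitPr: zt => t1 t2.
rewrite -2!cat_cons cat_uniq => /and3P[ut1 /norP[zt1 _] _].
rewrite cat_path => /and3P[pt1 lz _].
apply: (negP (acE (w :: u :: rcons t1 z) _ _)).
- by rewrite -2!rcons_cons rcons_uniq zt1 ut1.
- by rewrite /= size_rcons.
rewrite /= rcons_path.
by move: pt1 => /= /andP[wu ut]; rewrite rcons_path last_rcons wu ut lz.
Qed.

Lemma acyclic_leaf E : simple_edges E -> acyclic E -> E != set0 ->
  exists w u, [set w; u] \in E /\ forall e, e \in E -> w \in e -> e = [set w; u].
Proof.
move=> sE acE /set0Pn[e0 e0E].
have [|noleaf] := boolP [exists w, exists u, ([set w; u] \in E) &&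
                         [forall e in E, (w \in e) ==> (e == [set w; u])]].
  case/existsP=> w /existsP[u /andP[wuE /forall_inP leaf]].
  by exists w, u; split=> // e eE we; apply/eqP/(implyP (leaf e eE)).
have extend w u t : uniq (w :: u :: t) -> path (adj E) w (u :: t) ->
    exists z, uniq (z :: w :: u :: t) /\ path (adj E) z (w :: u :: t).
  move=> ut pt; have wuE : [set w; u] \in E by case/andP: pt.
  move/existsPn/(_ w)/existsPn/(_ u): noleaf; rewrite wuE /=.
  case/forall_inPn=> e eE; rewrite negb_imply => /andP[we ne].
  have [z zw def_e] := simple_edge_other sE eE we.
  have zu : z != u by apply: contraNneq _ ne => zu; rewrite def_e zu.
  have zwE : adj E z w by rewrite adjC /adj -def_e.
  exists z; split; last by rewrite /= zwE.
  have zt := acyclic_path_notin acE ut pt zwE.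
  by move: ut; rewrite /= !inE !negb_or zw zu zt => ->.
have long n : exists w u t,
    [/\ size t = n, uniq (w :: u :: t) & path (adj E) w (u :: t)].
  elim: n => [|n [w [u [t [<- ut pt]]]]].
    have /cards2P[a [b [ab def_e0]]] : #|e0| == 2 by rewrite sE.
    by exists a, b, [::]; rewrite /= inE ab /adj -def_e0 e0E.
  have [z [uz pz]] := extend _ _ _ ut pt.
  by exists z, w, (u :: t).
have [w [u [t [tV ut _]]]] := long #|V|.
by move: (max_card (mem (w :: u :: t))); rewrite (card_uniqP ut) /= tV ltnNge leqnSn.
Qed.

Lemma acyclic_card_lt E (A : {set V}) :
  simple_edges E -> acyclic E -> (forall e, e \in E -> e \subset A) -> A != set0 ->
  #|E| < #|A|.
Proof.
move cardE: #|E| => n; elim: n E A cardE => [|n IHn] E A cardE sE acE EA A0.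
  by rewrite card_gt0.
have [|w [u [wuE leaf]]] := acyclic_leaf sE acE; first by rewrite -card_gt0 cardE.
have wu : w != u by apply/eqP => wu; move: (sE _ wuE); rewrite wu setUid cards1.
have wA : w \in A by apply: (subsetP (EA _ wuE)); rewrite !inE eqxx.
have uA : u \in A by apply: (subsetP (EA _ wuE)); rewrite !inE eqxx orbT.
rewrite (cardsD1 w A) wA ltnS (IHn (E :\ [set w; u])) //.
- by move: cardE; rewrite (cardsD1 [set w; u] E) wuE => -[].
- by move=> e /setD1P[_]; exact: sE.
- by apply: acyclic_sub acE; exact: subD1set.
- move=> e /setD1P[ne eE]; apply/subsetP => x xe.
  rewrite !inE (subsetP (EA e eE) x xe) andbT.
  by apply: contraNneq ne => xw; rewrite (leaf e eE) -?xw.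
by apply/set0Pn; exists u; rewrite !inE eq_sym wu.
Qed.

(* [is_cycle_of] quantifies over sequences, so membership is decided classically. *)
Definition cycles_of E : {set {set {set V}}} :=
  [set C | if excluded_middle_informative (is_cycle_of E C) then true else false].

Lemma in_cycles_of E C : C \in cycles_of E <-> is_cycle_of E C.
Proof. by rewrite inE; case: excluded_middle_informative. Qed.

Lemma num_cycles_eq_card E : num_cycles_eq E #|cycles_of E|.
Proof. by exists (cycles_of E); split=> // C; apply: in_cycles_of. Qed.

(* Deleting one edge from every cycle leaves a forest. *)
Lemma card_edges_lt_cycles E (v : V) :
  simple_edges E -> #|E| < #|V| + #|cycles_of E|.
Proof.
move=> sE; pose pick_edge C := odflt set0 [pick e in C].
have pick_edgeP C : is_cycle_of E C -> pick_edge C \in C.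
  case=> _ [s [s3 _ ->]]; rewrite /pick_edge; case: pickP => // none.
  have /set0Pn[e es] := cycle_edges_neq0 (leq_ltn_trans (leq0n 2) s3).
  by move: (none e); rewrite es.
set R := pick_edge @: cycles_of E.
have acER : acyclic (E :\: R).
  move=> s us s3; apply/negP => /cycle_edges_sub sER.
  have Cs : is_cycle_of E (cycle_edges s).
    by split; [exact: subset_trans sER (subsetDl E R) | exists s].
  have /setDP[_] := subsetP sER _ (pick_edgeP _ Cs).
  by rewrite imset_f //; apply/in_cycles_of.
have ltER : #|E :\: R| < #|V|.
  rewrite -cardsT; apply: acyclic_card_lt acER _ _.
  - by move=> e /setDP[eE _]; exact: sE.
  - by move=> e _; apply: subsetT.
  by apply/set0Pn; exists v.
rewrite -(cardsID R E) addnC -addSn leq_add // (leq_trans (subset_leq_card (subsetIr E R))) //.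
exact: leq_imset_card.
Qed.

Lemma cactus_cycles_trivIset E : cactus E -> trivIset (cycles_of E).
Proof.
case=> _ cacE; apply/trivIsetP => C1 C2 /in_cycles_of C1E /in_cycles_of C2E.
apply: contraNT => /pred0Pn[e /andP[eC1 eC2]]; apply/eqP.
by apply: (cacE e _ _ _ C1E C2E) => //; apply: (subsetP C1E.1).
Qed.

Lemma bipartite_cycle_card (f : V -> bool) E C :
  (forall u v, adj E u v -> f u != f v) -> is_cycle_of E C -> 4 <= #|C|.
Proof.
move=> fE [CE [s [s3 us defC]]]; rewrite defC card_cycle_edges // in CE *.
have := cycle_alternating_even fE (cycle_in_edges us CE).
by case: (size s) s3 => [|[|[|[|m]]]].
Qed.

Lemma bipartite_cactus_cycles (f : V -> bool) E :
  (forall u v, adj E u v -> f u != f v) -> cactus E ->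
  4 * #|cycles_of E| <= #|E|.
Proof.
move=> fE cacE; rewrite mulnC -sum_nat_const.
apply: (@leq_trans (\sum_(C in cycles_of E) #|C|)).
  by apply: leq_sum => C /in_cycles_of; apply: bipartite_cycle_card fE.
rewrite (eqP (cactus_cycles_trivIset cacE)); apply: subset_leq_card.
by apply/bigcupsP => C /in_cycles_of[].
Qed.

End Graphs.

Lemma card_set2I_eq1 (T : finType) (a b : T) (X : {set T}) :
  a != b -> #|[set a; b] :&: X| = 1 -> (a \in X) != (b \in X).
Proof.
move=> ab; case aX: (a \in X); case bX: (b \in X) => //=.
  suff -> : [set a; b] :&: X = [set a; b] by rewrite cards2 ab.
  by apply/setIidPl/subsetP => x; rewrite !inE => /orP[]/eqP->.
suff -> : [set a; b] :&: X = set0 by rewrite cards0.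
by apply/setP => x; rewrite !inE; case: eqP => [->|_]; case: eqP => [->|_]; rewrite ?aX ?bX ?andbF.
Qed.

(* The new vertices x, y, x', y' are [inr 0], [inr 1], [inr 2], [inr 3]. *)
Definition hcol (T : finType) (X : {set T}) (v : HV T) : bool :=
  match v with inl a => a \in X | inr i => (val i == 1) || (val i == 2) end.

Lemma H_edges_coloured (T : finType) (EG : {set {set T}}) (X : {set T}) :
  simple_edges EG -> (forall e, e \in EG -> #|e :&: X| = 1) ->
  properly_coloured (hcol X) (H_edges EG X).
Proof.
move=> sEG bipEG e; rewrite !inE => /orP[/orP[/orP[]|]|].
- case/imsetP=> e' e'EG ->.
  have /cards2P[a [b [ab def_e']]] : #|e'| == 2 by rewrite sEG.
  exists (inl a), (inl b); rewrite def_e' imsetU1 imset_set1; split=> //=.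
  by apply: card_set2I_eq1 ab _; rewrite -def_e' bipEG.
- by case/imsetP=> v vX ->; exists (vx T), (inl v); rewrite /= vX.
- by case/imsetP=> v; rewrite inE => /negbTE vY ->; exists (vy T), (inl v); rewrite /= vY.
by rewrite -!orbA => /or4P[] /eqP->; [exists (vx T), (vy T) | exists (vx T), (vx' T)
  | exists (vx' T), (vy' T) | exists (vy T), (vy' T)].
Qed.

Theorem mainTheorem2 (T : finType) (EG : {set {set T}}) (X : {set T})
  (HG : simple_edges EG)
  (Hbip : forall e, e \in EG -> #|e :&: X| = 1)
  (H3 : 3 %| #|T|)
  (F : {set {set HV T}})
  (HFsub : F \subset H_edges EG X)
  (Hdel : ((#|H_edges EG X|%:Z - #|F|%:Z) <=
           #|H_edges EG X|%:Z - ((4 * #|T|) %/ 3)%:Z - 4)%R)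
  (Hcac : cactus F) :
  num_cycles_eq F (#|T| %/ 3 + 1) /\ #|T| %/ 3 + 1 = (#|HV T| - 1) %/ 3.
Proof.
have cardHV : #|HV T| = #|T| + 4 by rewrite card_sum card_ord.
have colF := properly_coloured_sub HFsub (H_edges_coloured HG Hbip).
have le_cycles := bipartite_cactus_cycles (properly_coloured_adj colF) Hcac.
have lt_cycles := card_edges_lt_cycles (vx T) (properly_coloured_simple colF).
have ge_F : (4 * #|T|) %/ 3 + 4 <= #|F| by lia.
case/dvdnP: H3 => k defT; rewrite cardHV defT in lt_cycles *.
rewrite defT mulnA mulnK // in ge_F; rewrite mulnK //.
have -> : k + 1 = #|cycles_of F| by lia.
by split; [apply: num_cycles_eq_card | lia].
Qed.
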